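(* Let $q,d\geq 2$ be integers. For every $A\in\mathbb{N}$ and every $\mathbf{s}=(\theta_u,\theta_w,\theta_2,\theta_1,\theta_0)\in\mathbb{Z}^5$ (a row vector), $$\gamma(qA,q,d;\mathbf{s})=\sum_{\lambda=0}^{q-1}\gamma(A,q,d;\mathbf{s}M_\lambda),$$ where, for each $\lambda\in\{0,\ldots,q-1\}$, $$M_\lambda=\begin{pmatrix} q & \lambda-q+1 & q & \lambda-q+1 & 0\\ 0 & 1 & 0 & 1 & 0\\ 0 & 0 & q^2 & \lambda q-\frac{q(q-1)}{2} & \frac{\lambda(\lambda+1)}{2}\\ 0 & 0 & 0 & q & \lambda\\ 0 & 0 & 0 & 0 & 1 \end{pmatrix}.$$
   Context: For an integer $q\geq 2$ and $n\in\mathbb{N}=\{0,1,2,\ldots\}$: $v_q(0)=0$ and, for $n>0$, $v_q(n)=\max\{k\in\mathbb{N}: q^k\mid n\}$; $w_q(n)=\sum_{i=0}^n v_q(i)$; $u_q(n)=\sum_{i=0}^n w_q(i)$. For $\mathbf{s}=(\theta_u,\theta_w,\theta_2,\theta_1,\theta_0)\in\mathbb{Z}^5$ and $A\in\mathbb{N}$, $\gamma(A,q,d;\mathbf{s})$ denotes the number of $n\in\mathbb{N}$ with $n<A$ such that $\theta_u u_q(n)+\theta_w w_q(n)+\theta_2\frac{n(n+1)}{2}+\theta_1 n+\theta_0\equiv 0 \pmod d$. *)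

From HB Require Import structures.
From mathcomp Require Import all_boot all_order all_algebra.
Set Implicit Arguments.
Unset Strict Implicit.
Unset Printing Implicit Defensive.
Import Order.TTheory GRing.Theory Num.Theory.
Local Open Scope ring_scope.

(* v_q(0) = 0; for n > 0, v_q(n) = max { k : q^k | n }.
   For q >= 2 and n > 0 every such k satisfies k < n+1, so the max over
   k < n.+1 is the max over all k. *)
Definition vq (q n : nat) : nat :=
  (if n == 0 then 0 else \max_(k < n.+1 | q ^ k %| n) (k : nat))%N.

Definition wq (q n : nat) : nat := (\sum_(0 <= i < n.+1) vq q i)%N.
Definition uq (q n : nat) : nat := (\sum_(0 <= i < n.+1) wq q i)%N.

Definition gamma_form (q : nat) (s : 'rV[int]_5) (n : nat) : int :=
  (s 0 0 * (uq q n)%:Z + s 0 1 * (wq q n)%:Z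
   + s 0 2 * ((n * n.+1) %/ 2)%N%:Z + s 0 3 * n%:Z + s 0 4)%R.

Definition gamma (A q d : nat) (s : 'rV[int]_5) : nat :=
  count (fun n => ((d : int) %| gamma_form q s n)%Z) (iota 0 A).

Definition Mlam (q lam : nat) : 'M[int]_5 :=
  \matrix_(i < 5, j < 5)
   match nat_of_ord i, nat_of_ord j with
   | 0, 0 => q%:Z
   | 0, 1 => (lam%:Z - q%:Z + 1)%R
   | 0, 2 => q%:Z
   | 0, 3 => (lam%:Z - q%:Z + 1)%R
   | 1, 1 => 1%R
   | 1, 3 => 1%R
   | 2, 2 => (q ^ 2)%N%:Z
   | 2, 3 => (lam%:Z * q%:Z - ((q * q.-1) %/ 2)%N%:Z)%R
   | 2, 4 => ((lam * lam.+1) %/ 2)%N%:Z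
   | 3, 3 => q%:Z
   | 3, 4 => lam%:Z
   | 4, 4 => 1%R
   | _, _ => 0%R
   end.

(* Write every n < qA as n = q m + lam with m < A and lam < q.  Since
   v_q(q m) = v_q(m) + 1 and v_q(q m + j) = 0 for 0 < j < q, the values
   u_q(n), w_q(n), n(n+1)/2, n and 1 are affine in u_q(m), w_q(m), m(m+1)/2,
   m and 1, the coefficients being the columns of M_lam.  Hence the form with
   coefficients s at n equals the form with coefficients s M_lam at m, and
   counting the n < qA by residue class mod q gives the identity, for every
   modulus d. *)
From mathcomp Require Import all_boot all_order all_algebra.
From mathcomp Require Import zify ring.
Import GRing.Theory.

Local Notation tri n := ((n * n.+1) %/ 2).

Section Valuation.

Variable q : nat.
Hypothesis q_gt1 : 1 < q.

Lemma dvdn_exp_vq n : q ^ vq q n %| n.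
Proof.
rewrite /vq; case: eqP => [->|_]; first exact: dvdn0.
by apply: (big_ind (fun k => q ^ k %| n)) => // a b; rewrite /maxn; case: ifP.
Qed.

Lemma leq_vq n k : 0 < n -> q ^ k %| n -> k <= vq q n.
Proof.
move=> n_gt0 qk_n; rewrite /vq; have -> : (n == 0) = false by lia.
have k_lt : k < n.+1 by have := dvdn_leq n_gt0 qk_n; have := ltn_expl k q_gt1; lia.
exact: (@leq_bigmax_cond _ (fun i : 'I_n.+1 => q ^ i %| n) val (Ordinal k_lt)).
Qed.

Lemma vq_eq n k : 0 < n -> q ^ k %| n -> ~~ (q ^ k.+1 %| n) -> vq q n = k.
Proof.
move=> n_gt0 qk_n qk1_n; apply/eqP; rewrite eqn_leq leq_vq // andbT.
apply: contraR qk1_n; rewrite -ltnNge => lt_k.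
exact: dvdn_trans (dvdn_exp2l q lt_k) (dvdn_exp_vq n).
Qed.

Lemma vq_mulq m : 0 < m -> vq q (q * m) = (vq q m).+1.
Proof.
move=> m_gt0; have q_gt0 : 0 < q by lia.
apply: vq_eq; first by rewrite muln_gt0 q_gt0.
  by rewrite expnS dvdn_pmul2l ?dvdn_exp_vq.
by rewrite expnS dvdn_pmul2l //; apply/negP => /(leq_vq _ _ m_gt0); lia.
Qed.

Lemma vq_ndvdn n : ~~ (q %| n) -> vq q n = 0.
Proof.
move=> q_n; have n_gt0 : 0 < n by case: n q_n; rewrite ?dvdn0.
by apply: vq_eq; rewrite ?dvd1n ?expn1.
Qed.

End Valuation.

Lemma wqS q n : wq q n.+1 = wq q n + vq q n.+1.
Proof. by rewrite /wq big_nat_recr. Qed.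

Lemma wq0 q : wq q 0 = 0.
Proof. by rewrite /wq big_nat1 /vq. Qed.

Lemma uqS q n : uq q n.+1 = uq q n + wq q n.+1.
Proof. by rewrite /uq big_nat_recr. Qed.

Lemma uq0 q : uq q 0 = 0.
Proof. by rewrite /uq big_nat1 wq0. Qed.

Lemma tri_mul2 n : tri n * 2 = n * n.+1.
Proof. by apply: divnK; rewrite dvdn2 oddM /=; case: (odd n). Qed.

Lemma triD a b : tri (a + b) = tri a + a * b + tri b.
Proof.
apply/eqP; rewrite -(eqn_pmul2r (_ : 0 < 2)) //; apply/eqP.
rewrite tri_mul2 (mulnDl (_ + _)) (mulnDl (tri a)) (tri_mul2 a) (tri_mul2 b).
by rewrite -[a.+1]addn1 -[b.+1]addn1 -[(a + b).+1]addn1; ring.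
Qed.

Lemma tri_mul q m : 0 < q -> tri (q * m) + (q * q.-1) %/ 2 * m = q ^ 2 * tri m.
Proof.
case: q => // p _; rewrite /= (mulnC p.+1 p).
apply/eqP; rewrite -(eqn_pmul2r (_ : 0 < 2)) //; apply/eqP.
rewrite mulnDl (tri_mul2 (p.+1 * m)) (mulnAC (tri p)) (tri_mul2 p) -(mulnA (p.+1 ^ 2)) (tri_mul2 m).
by rewrite -[p.+1]addn1 -[m.+1]addn1 -[(_ * m).+1]addn1; ring.
Qed.

Lemma triS m : tri m.+1 = tri m + m.+1.
Proof. by rewrite -[in LHS]addn1 triD muln1 -addnA (_ : tri 1 = 1) // addn1. Qed.

Section Blocks.

Variable q : nat.
Hypothesis q_gt1 : 1 < q.

Lemma wq_mulqD_const m l : l < q -> wq q (q * m + l) = wq q (q * m).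
Proof.
elim: l => [|l IHl] l_lt; first by rewrite addn0.
rewrite addnS wqS -addnS vq_ndvdn // ?IHl ?addn0 //; first lia.
by rewrite dvdn_addr ?dvdn_mulr //; apply/negP => /dvdn_leq; lia.
Qed.

Lemma wq_mulqD m l : l < q -> wq q (q * m + l) = wq q m + m.
Proof.
move=> l_lt; rewrite wq_mulqD_const //; elim: m => [|m IHm].
  by rewrite muln0 wq0.
have -> : q * m.+1 = (q * m + q.-1).+1 by lia.
rewrite wqS wq_mulqD_const; last lia.
have -> : (q * m + q.-1).+1 = q * m.+1 by lia.
by rewrite IHm vq_mulq // wqS; lia.
Qed.

Lemma uq_mulqD m l : l < q -> uq q (q * m + l) = uq q (q * m) + l * (wq q m + m).
Proof.
elim: l => [|l IHl] l_lt; first by rewrite addn0 mul0n addn0.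
by rewrite addnS uqS -addnS wq_mulqD // IHl; lia.
Qed.

Lemma uq_mulq m :
  uq q (q * m) + q * (wq q m + m) = q * uq q m + q * tri m + (wq q m + m).
Proof.
elim: m => [|m IHm]; first by rewrite muln0 uq0 wq0; lia.
have qmS : q * m.+1 = (q * m + q.-1).+1 by lia.
have wq_qmS : wq q (q * m + q.-1).+1 = wq q m.+1 + m.+1.
  by rewrite -qmS -(addn0 (q * m.+1)) wq_mulqD //; lia.
rewrite qmS uqS uq_mulqD; last lia.
rewrite wq_qmS triS uqS.
have qW : q * (wq q m + m) = wq q m + m + q.-1 * (wq q m + m).
  by rewrite -mulSn prednK // ltnW.
lia.
Qed.

End Blocks.

Local Open Scope ring_scope.

Lemma uq_mulqD_int q m l : (1 < q)%N -> (l < q)%N ->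
  (uq q (q * m + l))%:Z = q%:Z * (uq q m)%:Z
    + (l%:Z - q%:Z + 1) * ((wq q m)%:Z + m%:Z) + q%:Z * (tri m)%:Z.
Proof.
move=> q_gt1 l_lt; rewrite uq_mulqD // !PoszD !PoszM.
have := congr1 Posz (uq_mulq _ q_gt1 m).
by rewrite !PoszD !PoszM => /(canRL (addrK _)) ->; ring.
Qed.

Lemma tri_mulqD_int q m l : (0 < q)%N ->
  (tri (q * m + l))%:Z = (q ^ 2)%N%:Z * (tri m)%:Z
    + (l%:Z * q%:Z - ((q * q.-1) %/ 2)%N%:Z) * m%:Z + (tri l)%:Z.
Proof.
move=> q_gt0; rewrite triD !PoszD !PoszM.
have := congr1 Posz (tri_mul q m q_gt0).
by rewrite !PoszD !PoszM => /(canRL (addrK _)) ->; ring.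
Qed.

Lemma mulmx_row5E (s : 'rV[int]_5) (M : 'M[int]_5) j :
  (s *m M) 0 j = s 0 0 * M 0 j + s 0 1 * M 1 j + s 0 2 * M 2 j
                 + s 0 3 * M 3 j + s 0 4 * M 4 j.
Proof.
rewrite mxE !big_ord_recl big_ord0 addr0 !addrA.
by repeat f_equal; apply/val_inj.
Qed.

Lemma gamma_form_mulqD q s m l : (1 < q)%N -> (l < q)%N ->
  gamma_form q s (q * m + l) = gamma_form q (s *m Mlam q l) m.
Proof.
move=> q_gt1 l_lt.
rewrite /gamma_form !mulmx_row5E !mxE /= uq_mulqD_int // wq_mulqD //.
by rewrite tri_mulqD_int ?(ltn_trans _ q_gt1) // !PoszD; ring.
Qed.

Local Close Scope ring_scope.

Lemma count_iota0 (P : pred nat) n : count P (iota 0 n) = \sum_(0 <= i < n) P i.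
Proof. by rewrite -sum1_count big_mkcond /index_iota subn0. Qed.

Lemma big_nat_mul_residue (R : Type) (idx : R) (op : Monoid.com_law idx)
    (F : nat -> R) q A :
  \big[op/idx]_(0 <= i < q * A) F i
    = \big[op/idx]_(lam < q) \big[op/idx]_(0 <= m < A) F (q * m + lam).
Proof.
elim: A => [|A IHA].
  by rewrite muln0 big_geq // big1 // => i _; rewrite big_geq.
rewrite mulnS addnC (@big_cat_nat _ _ _ (q * A)) ?leq_addr //= IHA.
rewrite -{1}(add0n (q * A)) big_addn addKn big_mkord -big_split /=.
by apply: eq_bigr => i _; rewrite big_nat_recr //= (addnC i).
Qed.

Theorem proposition2p3 (q d : nat) (hq : (2 <= q)%N) (hd : (2 <= d)%N)
  (A : nat) (s : 'rV[int]_5) :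
  gamma (q * A) q d s = (\sum_(lam < q) gamma A q d (s *m Mlam q lam))%N.
Proof.
rewrite /gamma count_iota0 big_nat_mul_residue.
apply: eq_bigr => lam _; rewrite count_iota0.
by apply: eq_big_nat => m _; rewrite gamma_form_mulqD.
Qed.
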